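(* Let $H$ be a complex Hilbert space, let $P \in \mathcal{L}(H)$ be an orthogonal projection satisfying the property $\mathcal{AN}$, and let $\eta > 1/2$ be a real number. Then the operator $T := \eta I - P$ satisfies the property $\mathcal{AN}^*$.
   Context: $\mathcal{L}(H)$ is the space of bounded linear operators on $H$. For a closed subspace $M \neq \{0\}$ of $H$ and $A \in \mathcal{L}(H)$: $A|_M$ satisfies $\mathcal{N}$ if there is $x_0 \in M$ with $\|x_0\|=1$ and $\|Ax_0\| = \sup\{\|Ax\| : x\in M, \|x\|=1\}$; $A|_M$ satisfies $\mathcal{N}^*$ if there is $x_0 \in M$ with $\|x_0\|=1$ and $\|Ax_0\| = \inf\{\|Ax\| : x\in M, \|x\|=1\}$. $A$ satisfies the property $\mathcal{AN}$ (resp. $\mathcal{AN}^*$) if $A|_M$ satisfies $\mathcal{N}$ (resp. $\mathcal{N}^*$) for every closed subspace $M \neq \{0\}$ of $H$. *)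

From HB Require Import structures.
From mathcomp Require Import all_boot all_order all_algebra.
From mathcomp Require Import complex.
From mathcomp Require Import classical_sets reals.
Set Implicit Arguments.
Unset Strict Implicit.
Unset Printing Implicit Defensive.
Import Order.TTheory GRing.Theory Num.Theory.
Local Open Scope ring_scope.
Local Open Scope classical_set_scope.

Record hilbert (R : realType) (V : lmodType R[i]) := Hilbert {
  inner : V -> V -> R[i];
  inner_linear : forall (a : R[i]) (x1 x2 y : V),
      inner (a *: x1 + x2) y = a * inner x1 y + inner x2 y;
  inner_conj : forall x y : V, inner y x = ((inner x y)^*)%C;
  inner_ge0 : forall x : V, 0 <= inner x x;
  inner_def : forall x : V, inner x x = 0 -> x = 0;
  inner_complete : forall u : nat -> V,
      (forall e : R, 0 < e -> exists N : nat, forall m n : nat,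
          (N <= m)%N -> (N <= n)%N ->
          Num.sqrt (complex.Re (inner (u m - u n) (u m - u n))) < e) ->
      exists l : V, forall e : R, 0 < e -> exists N : nat, forall n : nat,
          (N <= n)%N -> Num.sqrt (complex.Re (inner (u n - l) (u n - l))) < e
}.

Section Hilbert.
Variables (R : realType) (V : lmodType R[i]) (H : hilbert V).

Definition hnorm (x : V) : R := Num.sqrt (complex.Re (inner H x x)).

Definition hconverges (u : nat -> V) (l : V) : Prop :=
  forall e : R, 0 < e -> exists N : nat, forall n : nat,
    (N <= n)%N -> hnorm (u n - l) < e.

Definition bounded_op (A : V -> V) : Prop :=
  (forall (a : R[i]) (x y : V), A (a *: x + y) = a *: A x + A y) /\
  exists c : R, forall x : V, hnorm (A x) <= c * hnorm x.

Definition orth_proj (P : V -> V) : Prop :=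
  bounded_op P /\ (forall x, P (P x) = P x) /\
  (forall x y, inner H (P x) y = inner H x (P y)).

Definition closed_subspace (M : set V) : Prop :=
  M 0 /\ (forall (a : R[i]) x y, M x -> M y -> M (a *: x + y)) /\
  (forall (u : nat -> V) (l : V), (forall n, M (u n)) -> hconverges u l -> M l).

Definition norm_image (A : V -> V) (M : set V) : set R :=
  [set r | exists x, M x /\ hnorm x = 1 /\ r = hnorm (A x)].

Definition satN (A : V -> V) (M : set V) : Prop :=
  exists x0, M x0 /\ hnorm x0 = 1 /\ hnorm (A x0) = sup (norm_image A M).

Definition satNstar (A : V -> V) (M : set V) : Prop :=
  exists x0, M x0 /\ hnorm x0 = 1 /\ hnorm (A x0) = inf (norm_image A M).

Definition propAN (A : V -> V) : Prop :=
  forall M : set V, closed_subspace M -> M <> [set 0] -> satN A M.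

Definition propANstar (A : V -> V) : Prop :=
  forall M : set V, closed_subspace M -> M <> [set 0] -> satNstar A M.

End Hilbert.

From HB Require Import structures.
From mathcomp Require Import all_boot all_order all_algebra.
From mathcomp Require Import complex.
From mathcomp Require Import classical_sets reals.
From mathcomp Require Import ring lra.
Set Implicit Arguments.
Unset Strict Implicit.
Unset Printing Implicit Defensive.
Import Order.TTheory GRing.Theory Num.Theory.
Local Open Scope ring_scope.

(* For an orthogonal projection P, ||(eta I - P) x||^2 = eta^2 ||x||^2 + (1 - 2 eta) ||P x||^2.
   Since 1 - 2 eta < 0, on the unit sphere of M the norm of (eta I - P) x decreases as
   ||P x|| increases, so a unit vector of M at which ||P x|| attains its supremum
   (property AN of P) is one at which ||(eta I - P) x|| attains its infimum. *)

Section InnerProduct.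
Variables (R : realType) (V : lmodType R[i]) (H : hilbert V).
Local Notation "<< x , y >>" := (inner H x y).

Lemma innerDl x y z : << x + y, z >> = << x, z >> + << y, z >>.
Proof. by have := inner_linear H 1 x y z; rewrite scale1r mul1r. Qed.

Lemma inner0l z : << 0, z >> = 0.
Proof. by have := innerDl 0 0 z; rewrite addr0 -{1}[<< 0, z >>]addr0 => /addrI. Qed.

Lemma innerZl a x z : << a *: x, z >> = a * << x, z >>.
Proof. by rewrite -[a *: x]addr0 inner_linear inner0l addr0. Qed.

Lemma innerBl x y z : << x - y, z >> = << x, z >> - << y, z >>.
Proof. by rewrite innerDl -scaleN1r innerZl mulN1r. Qed.

Lemma innerZr a x z : << z, a *: x >> = (a^*)%C * << z, x >>.
Proof.
rewrite inner_conj innerZl [<< z, x >>]inner_conj.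
case: a => a1 a2; case: (<< x, z >>) => b1 b2 /=.
by apply/eqP; rewrite eq_complex /=; apply/andP; split; apply/eqP; ring.
Qed.

Lemma innerBr x y z : << z, x - y >> = << z, x >> - << z, y >>.
Proof.
rewrite inner_conj innerBl [<< z, x >>]inner_conj [<< z, y >>]inner_conj.
case: (<< x, z >>) => a1 a2; case: (<< y, z >>) => b1 b2 /=.
by apply/eqP; rewrite eq_complex /=; apply/andP; split; apply/eqP; ring.
Qed.

Lemma Re_inner_ge0 x : 0 <= complex.Re << x, x >>.
Proof. by have := inner_ge0 H x; rewrite lecE => /andP[]. Qed.

Lemma sqr_hnorm x : hnorm H x ^+ 2 = complex.Re << x, x >>.
Proof. exact/sqr_sqrtr/Re_inner_ge0. Qed.

Lemma hnorm_ge0 x : 0 <= hnorm H x.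
Proof. exact: sqrtr_ge0. Qed.

End InnerProduct.

Section ShiftedProjection.
Variables (R : realType) (V : lmodType R[i]) (H : hilbert V) (P : V -> V).
Hypothesis P_idem : forall x, P (P x) = P x.
Hypothesis P_selfadj : forall x y, inner H (P x) y = inner H x (P y).

Lemma sqr_hnorm_shift_proj (e : R) x :
  hnorm H ((e%:C)%C *: x - P x) ^+ 2 =
  e ^+ 2 * hnorm H x ^+ 2 + (1 - 2 * e) * hnorm H (P x) ^+ 2.
Proof.
have xPx : inner H x (P x) = inner H (P x) (P x) by rewrite P_selfadj P_idem.
have Pxx : inner H (P x) x = inner H (P x) (P x) by rewrite -{1}P_idem P_selfadj.
rewrite !sqr_hnorm !innerBl !innerZl !innerBr !innerZr xPx Pxx.
by case: (inner H x x) => a1 a2; case: (inner H (P x) (P x)) => b1 b2 /=; ring.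
Qed.

Lemma hnorm_shift_proj_antitone (e : R) x y :
  1 / 2 <= e -> hnorm H x = 1 -> hnorm H y = 1 ->
  hnorm H (P x) <= hnorm H (P y) ->
  hnorm H ((e%:C)%C *: y - P y) <= hnorm H ((e%:C)%C *: x - P x).
Proof.
move=> he nx ny le_Pxy.
have sqr_le : hnorm H (P x) ^+ 2 <= hnorm H (P y) ^+ 2.
  by rewrite ler_sqr // nnegrE hnorm_ge0.
rewrite -ler_sqr ?nnegrE ?hnorm_ge0 //.
by rewrite !sqr_hnorm_shift_proj nx ny; nra.
Qed.

End ShiftedProjection.

Section Extrema.
Variables (R : realType) (V : lmodType R[i]) (H : hilbert V).
Variables (A : V -> V) (M : set V).

Lemma satN_argmax (c : R) :
  (forall x, hnorm H (A x) <= c * hnorm H x) -> satN H A M ->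
  exists2 x0, M x0 /\ hnorm H x0 = 1 &
    forall x, M x -> hnorm H x = 1 -> hnorm H (A x) <= hnorm H (A x0).
Proof.
move=> A_bounded [x0 [Mx0 [nx0 Ax0_sup]]]; exists x0 => // x Mx nx.
rewrite Ax0_sup; apply: ub_le_sup; last by exists x.
by exists c => _ [y [_ [ny ->]]]; rewrite -[c]mulr1 -ny.
Qed.

Lemma satNstar_of_argmin x0 : M x0 -> hnorm H x0 = 1 ->
  (forall x, M x -> hnorm H x = 1 -> hnorm H (A x0) <= hnorm H (A x)) ->
  satNstar H A M.
Proof.
move=> Mx0 nx0 x0_min; exists x0; split => //; split => //.
apply/eqP; rewrite eq_le; apply/andP; split.
- apply: lb_le_inf; first by exists (hnorm H (A x0)), x0.
  by move=> _ [x [Mx [nx ->]]]; exact: x0_min.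
- apply: ge_inf; last by exists x0.
  by exists 0 => _ [x [_ [_ ->]]]; exact: hnorm_ge0.
Qed.

End Extrema.

Theorem proposition3p12 (R : realType) (V : lmodType R[i]) (H : hilbert V)
  (P : V -> V) (eta : R) :
  orth_proj H P -> propAN H P -> 1 / 2 < eta ->
  propANstar H (fun x : V => (eta%:C)%C *: x - P x).
Proof.
move=> [[_ [c P_bounded]] [P_idem P_selfadj]] P_AN eta_gt M M_closed M_nontriv.
have [x0 [Mx0 nx0] x0_max] := satN_argmax P_bounded (P_AN M M_closed M_nontriv).
apply: (satNstar_of_argmin Mx0 nx0) => x Mx nx.
exact: hnorm_shift_proj_antitone (ltW eta_gt) nx nx0 (x0_max x Mx nx).
Qed.
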